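(* Let $M$ be a timelike surface in $\mathbb{R}^{n,1}$ with a canonical null direction with respect to a constant unit spacelike vector $Z$, with $W$ and $a$ as below. Then the Gaussian curvature of $M$ is $K=Z^{\top}(a)$.
   Context: $\mathbb{R}^{n,1}$ is $\mathbb{R}^{n+1}$ with the metric $-dx_1^2+dx_2^2+\dots+dx_{n+1}^2$. A surface is timelike if the induced metric has signature $(1,1)$; a vector $v$ is lightlike if $v\ne0$ and $\langle v,v\rangle=0$. For a constant vector $Z$, $Z=Z^\top+Z^\perp$ along $M$; $M$ has a canonical null direction with respect to $Z$ if $Z^\top$ is lightlike everywhere on $M$. $W$ is the unique lightlike tangent field with $\langle Z^\top,W\rangle=-1$, and $a:=\langle II(W,W),Z^\perp\rangle$, $II$ the second fundamental form. $K$ is the (sectional) Gaussian curvature of the induced Lorentzian metric. *)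

From Stdlib Require Import Reals ClassicalEpsilon.
Open Scope R_scope.

(** * Minkowski space R^{n,1}
    A vector of R^{n+1} is a function [nat -> R]; only components [0..n]
    matter.  Component 0 is the timelike coordinate x_1 of the paper. *)
Definition vec := nat -> R.

Fixpoint sumR (k : nat) (f : nat -> R) : R :=
  match k with O => 0 | S k' => sumR k' f + f k' end.

Definition minner (n : nat) (v w : vec) : R :=
  - v O * w O + sumR n (fun i => v (S i) * w (S i)).

Definition vadd (v w : vec) : vec := fun i => v i + w i.
Definition vsub (v w : vec) : vec := fun i => v i - w i.
Definition vscale (c : R) (v : vec) : vec := fun i => c * v i.

Definition vnonzero (n : nat) (v : vec) : Prop := exists i, (i <= n)%nat /\ v i <> 0.

Definition lightlike (n : nat) (v : vec) : Prop := vnonzero n v /\ minner n v v = 0.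

Definition pt := (R * R)%type.

(** partial derivatives (the value 0 is a junk value when the derivative
    does not exist; all functions used below are smooth on the domain). *)
Definition pd1 (f : pt -> R) (p : pt) : R :=
  match excluded_middle_informative
          (exists l, derivable_pt_lim (fun s => f (s, snd p)) (fst p) l) with
  | left H => proj1_sig (constructive_indefinite_description _ H)
  | right _ => 0
  end.

Definition pd2 (f : pt -> R) (p : pt) : R :=
  match excluded_middle_informative
          (exists l, derivable_pt_lim (fun s => f (fst p, s)) (snd p) l) with
  | left H => proj1_sig (constructive_indefinite_description _ H)
  | right _ => 0
  end.

(** partial derivative with respect to coordinate i (0 = u, 1 = v) *)
Definition pd (i : nat) (f : pt -> R) : pt -> R :=
  match i with O => pd1 f | _ => pd2 f end.

Definition vpd (i : nat) (X : pt -> vec) : pt -> vec :=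
  fun p k => pd i (fun q => X q k) p.

Definition open2 (U : pt -> Prop) : Prop :=
  forall p, U p -> exists r, 0 < r /\
    forall q, Rabs (fst q - fst p) < r -> Rabs (snd q - snd p) < r -> U q.

Definition continuous_at2 (f : pt -> R) (p : pt) : Prop :=
  forall eps, 0 < eps -> exists del, 0 < del /\
    forall q, Rabs (fst q - fst p) < del -> Rabs (snd q - snd p) < del ->
      Rabs (f q - f p) < eps.

Fixpoint itd (w : list nat) (f : pt -> R) : pt -> R :=
  match w with nil => f | cons i w' => pd i (itd w' f) end.

Definition smooth_on (U : pt -> Prop) (f : pt -> R) : Prop :=
  forall (w : list nat) (p : pt), U p ->
    continuous_at2 (itd w f) p /\
    (exists l, derivable_pt_lim (fun s => itd w f (s, snd p)) (fst p) l) /\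
    (exists l, derivable_pt_lim (fun s => itd w f (fst p, s)) (snd p) l).

Section Surface.
Variable n : nat.
Variable X : pt -> vec.

Definition tvec (c0 c1 : R) (p : pt) : vec :=
  vadd (vscale c0 (vpd 0 X p)) (vscale c1 (vpd 1 X p)).

Definition immersion_at (p : pt) : Prop :=
  forall a b, (forall k, (k <= n)%nat -> tvec a b p k = 0) -> a = 0 /\ b = 0.

Definition g (i j : nat) (p : pt) : R := minner n (vpd i X p) (vpd j X p).

Definition timelike_at (p : pt) : Prop :=
  exists a b c d,
    minner n (tvec a b p) (tvec a b p) = -1 /\
    minner n (tvec c d p) (tvec c d p) = 1 /\
    minner n (tvec a b p) (tvec c d p) = 0.

Definition detg (p : pt) : R := g 0 0 p * g 1 1 p - g 0 1 p * g 0 1 p.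

Definition ginv (i j : nat) (p : pt) : R :=
  match i, j with
  | O, O => g 1 1 p / detg p
  | S _, S _ => g 0 0 p / detg p
  | _, _ => - g 0 1 p / detg p
  end.

Definition Chr (k i j : nat) (p : pt) : R :=
  / 2 * (ginv k 0 p * (pd i (g j 0) p + pd j (g i 0) p - pd 0 (g i j) p)
       + ginv k 1 p * (pd i (g j 1) p + pd j (g i 1) p - pd 1 (g i j) p)).

(** Riemann tensor: R(d_i, d_j) d_k = Rup l i j k d_l, with
    R(A,B) = nabla_A nabla_B - nabla_B nabla_A - nabla_[A,B] *)
Definition Rup (l i j k : nat) (p : pt) : R :=
  pd i (Chr l j k) p - pd j (Chr l i k) p
  + (Chr 0 j k p * Chr l i 0 p + Chr 1 j k p * Chr l i 1 p)
  - (Chr 0 i k p * Chr l j 0 p + Chr 1 i k p * Chr l j 1 p).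

(** Gaussian (sectional) curvature of the induced metric:
    K = <R(X_u,X_v)X_v, X_u> / (g_uu g_vv - g_uv^2) *)
Definition GaussK (p : pt) : R :=
  (g 0 0 p * Rup 0 0 1 1 p + g 1 0 p * Rup 1 0 1 1 p) / detg p.

Definition tancoef (k : nat) (v : vec) (p : pt) : R :=
  ginv k 0 p * minner n v (vpd 0 X p) + ginv k 1 p * minner n v (vpd 1 X p).

Definition tanproj (v : vec) (p : pt) : vec :=
  tvec (tancoef 0 v p) (tancoef 1 v p) p.

Definition normproj (v : vec) (p : pt) : vec := vsub v (tanproj v p).

Definition II (i j : nat) (p : pt) : vec := normproj (vpd i (vpd j X) p) p.

Definition IIv (v0 v1 w0 w1 : R) (p : pt) : vec :=
  fun k => v0 * w0 * II 0 0 p k + v0 * w1 * II 0 1 p k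
         + v1 * w0 * II 1 0 p k + v1 * w1 * II 1 1 p k.

End Surface.

(* Everything in a chart is a rational function of the jets of X, of their
   products with Z, and of the coordinates w of W.  The three conditions
   |Z^T|^2 = 0, |W|^2 = 0 and <Z^T, W> = -1 pin down the metric in terms of w
   and the coordinates t of Z^T: it is the metric whose Gram matrix in the frame
   (Z^T, W) is [[0, -1], [-1, 0]].  Substituting it, Z^T(a) - K becomes a
   combination of the first and second derivatives of |Z^T|^2 and of the
   derivatives of |W|^2 and <Z, W> along Z^T, all of which vanish because these
   functions are constant on the surface.  The computation is done on a small
   language of jet expressions that can be evaluated and formally
   differentiated; its correctness in a chart needs only the symmetry of second
   partial derivatives. *)

From Stdlib Require Import Reals Lra Field Classical ClassicalEpsilon FunctionalExtensionality List.
From Coquelicot Require Import Coquelicot.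
Open Scope R_scope.

Lemma sumR_ext (m : nat) (f g : nat -> R) : (forall i, f i = g i) -> sumR m f = sumR m g.
Proof. intros H; induction m; simpl; [ring | rewrite IHm, H; ring]. Qed.

Lemma sumR_plus (m : nat) (f g : nat -> R) :
  sumR m (fun i => f i + g i) = sumR m f + sumR m g.
Proof. induction m; simpl; [ring | rewrite IHm; ring]. Qed.

Lemma sumR_minus (m : nat) (f g : nat -> R) :
  sumR m (fun i => f i - g i) = sumR m f - sumR m g.
Proof. induction m; simpl; [ring | rewrite IHm; ring]. Qed.

Lemma sumR_scal (m : nat) (c : R) (f : nat -> R) :
  sumR m (fun i => c * f i) = c * sumR m f.
Proof. induction m; simpl; [ring | rewrite IHm; ring]. Qed.

Lemma minner_sym (m : nat) (A B : vec) : minner m A B = minner m B A.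
Proof. unfold minner. f_equal; [ring |]. apply sumR_ext. intros; ring. Qed.

Lemma minner_plus_l (m : nat) (A B C : vec) :
  minner m (fun k => A k + B k) C = minner m A C + minner m B C.
Proof.
  unfold minner.
  rewrite (sumR_ext m _ (fun i => A (S i) * C (S i) + B (S i) * C (S i))) by (intros; ring).
  rewrite sumR_plus. ring.
Qed.

Lemma minner_minus_l (m : nat) (A B C : vec) :
  minner m (fun k => A k - B k) C = minner m A C - minner m B C.
Proof.
  unfold minner.
  rewrite (sumR_ext m _ (fun i => A (S i) * C (S i) - B (S i) * C (S i))) by (intros; ring).
  rewrite sumR_minus. ring.
Qed.

Lemma minner_scal_l (m : nat) (c : R) (A C : vec) :
  minner m (fun k => c * A k) C = c * minner m A C.
Proof.
  unfold minner.
  rewrite (sumR_ext m _ (fun i => c * (A (S i) * C (S i)))) by (intros; ring).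
  rewrite sumR_scal. ring.
Qed.

Lemma minner_plus_r (m : nat) (A B C : vec) :
  minner m C (fun k => A k + B k) = minner m C A + minner m C B.
Proof. rewrite !(minner_sym m C). apply minner_plus_l. Qed.

Lemma minner_minus_r (m : nat) (A B C : vec) :
  minner m C (fun k => A k - B k) = minner m C A - minner m C B.
Proof. rewrite !(minner_sym m C). apply minner_minus_l. Qed.

Lemma minner_scal_r (m : nat) (c : R) (A C : vec) :
  minner m C (fun k => c * A k) = c * minner m C A.
Proof. rewrite !(minner_sym m C). apply minner_scal_l. Qed.

Lemma is_derive_minner (m : nat) (F G : R -> vec) (dF dG : vec) (x : R) :
  (forall k, is_derive (fun s => F s k) x (dF k)) ->
  (forall k, is_derive (fun s => G s k) x (dG k)) ->
  is_derive (fun s => minner m (F s) (G s)) x (minner m dF (G x) + minner m (F x) dG).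
Proof.
  intros HF HG.
  assert (Hprod : forall k, is_derive (fun s => F s k * G s k) x (dF k * G x k + F x k * dG k))
    by (intros k; exact (is_derive_mult _ _ _ _ _ (HF k) (HG k) Rmult_comm)).
  assert (Hsum : forall j, is_derive (fun s => sumR j (fun i => F s (S i) * G s (S i))) x
                   (sumR j (fun i => dF (S i) * G x (S i) + F x (S i) * dG (S i)))).
  { induction j; simpl.
    - exact (is_derive_const _ x).
    - exact (is_derive_plus _ _ _ _ _ IHj (Hprod (S j))). }
  unfold minner.
  replace (- dF O * G x O + sumR m (fun i => dF (S i) * G x (S i))
           + (- F x O * dG O + sumR m (fun i => F x (S i) * dG (S i))))
    with (- (dF O * G x O + F x O * dG O)
          + sumR m (fun i => dF (S i) * G x (S i) + F x (S i) * dG (S i)))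
    by (rewrite sumR_plus; ring).
  eapply is_derive_ext;
    [| exact (is_derive_plus _ _ _ _ _ (is_derive_opp _ _ _ (Hprod O)) (Hsum m))].
  intros t. unfold plus, opp; simpl. ring.
Qed.

Lemma is_derive_minner_const_r (m : nat) (F : R -> vec) (dF Z : vec) (x : R) :
  (forall k, is_derive (fun s => F s k) x (dF k)) ->
  is_derive (fun s => minner m (F s) Z) x (minner m dF Z).
Proof.
  intros HF.
  assert (H := is_derive_minner m F (fun _ => Z) dF (fun _ => 0) x HF
                 (fun k => is_derive_const (Z k) x)).
  replace (minner m dF Z) with (minner m dF Z + minner m (F x) (fun _ => 0)); [exact H |].
  unfold minner at 2. rewrite (sumR_ext m _ (fun i => 0 * F x (S i))) by (intros; ring).
  rewrite sumR_scal. ring.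
Qed.

(** * Partial derivatives on the parameter plane *)

Definition coord_line (i : nat) (p : pt) (s : R) : pt :=
  match i with O => (s, snd p) | _ => (fst p, s) end.
Definition coord (i : nat) (p : pt) : R := match i with O => fst p | _ => snd p end.

Lemma derivable_pt_lim_near (f g : R -> R) (x r l : R) : 0 < r ->
  (forall y, Rabs (y - x) < r -> f y = g y) ->
  derivable_pt_lim f x l -> derivable_pt_lim g x l.
Proof.
  intros Hr Hfg. apply (derivable_pt_lim_locally_ext f g x (x - r) (x + r)); [lra |].
  intros z Hz. apply Hfg. apply Rabs_def1; lra.
Qed.

Lemma pd_unique (i : nat) (f : pt -> R) (p : pt) (l : R) :
  derivable_pt_lim (fun s => f (coord_line i p s)) (coord i p) l -> pd i f p = l.
Proof.
  intros H. destruct i as [|i]; simpl in *; [unfold pd1 | unfold pd2];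
    destruct excluded_middle_informative as [He | He].
  all: try (exfalso; apply He; eauto).
  all: destruct (constructive_indefinite_description _ He) as [l' Hl']; simpl;
         eapply uniqueness_limite; eauto.
Qed.

Lemma pd_undef (i : nat) (f : pt -> R) (p : pt) :
  ~ (exists l, derivable_pt_lim (fun s => f (coord_line i p s)) (coord i p) l) ->
  pd i f p = 0.
Proof.
  intros H. destruct i as [|i]; simpl in *; [unfold pd1 | unfold pd2];
    destruct excluded_middle_informative; tauto.
Qed.

Lemma pd_const (i : nat) (c : R) (p : pt) : pd i (fun _ => c) p = 0.
Proof. apply pd_unique. apply derivable_pt_lim_const. Qed.

Lemma pd_local (U : pt -> Prop) (h1 h2 : pt -> R) (i : nat) (p : pt) :
  open2 U -> U p -> (forall q, U q -> h1 q = h2 q) -> pd i h1 p = pd i h2 p.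
Proof.
  intros HU Hp Heq. destruct (HU p Hp) as [r [Hr Hbox]].
  assert (Hnear : forall s, Rabs (s - coord i p) < r ->
                    h1 (coord_line i p s) = h2 (coord_line i p s)).
  { intros s Hs. apply Heq, Hbox; destruct i; simpl in *;
      rewrite ?Rminus_diag, ?Rabs_R0; auto. }
  destruct (classic (exists l, derivable_pt_lim (fun s => h1 (coord_line i p s)) (coord i p) l))
    as [[l H] | Hn].
  - rewrite (pd_unique _ _ _ l H). symmetry. apply pd_unique.
    exact (derivable_pt_lim_near _ _ _ _ _ Hr Hnear H).
  - rewrite (pd_undef _ _ _ Hn). symmetry. apply pd_undef.
    intros [l H]. apply Hn. exists l.
    apply (derivable_pt_lim_near (fun s => h2 (coord_line i p s)) _ _ r _ Hr);
      [intros; symmetry; auto | exact H].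
Qed.

Lemma itd_app (w1 w2 : list nat) (f : pt -> R) : itd (w1 ++ w2) f = itd w1 (itd w2 f).
Proof. induction w1; simpl; congruence. Qed.

Lemma smooth_on_itd (U : pt -> Prop) (f : pt -> R) (w : list nat) :
  smooth_on U f -> smooth_on U (itd w f).
Proof. intros H w' p Hp. rewrite <- itd_app. apply H; auto. Qed.

Lemma smooth_on_pd_spec (U : pt -> Prop) (f : pt -> R) (i : nat) (p : pt) :
  smooth_on U f -> U p ->
  derivable_pt_lim (fun s => f (coord_line i p s)) (coord i p) (pd i f p).
Proof.
  intros H Hp. destruct (H nil p Hp) as [_ [[l0 H0] [l1 H1]]].
  destruct i as [|i]; [rewrite (pd_unique 0 f p l0 H0) | rewrite (pd_unique (S i) f p l1 H1)];
    assumption.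
Qed.

Lemma continuity_2d_pt_of_continuous_at2 (g : pt -> R) (x y : R) :
  continuous_at2 g (x, y) -> continuity_2d_pt (fun u v => g (u, v)) x y.
Proof.
  intros H eps. destruct (H eps (cond_pos eps)) as [d [Hd Hc]].
  exists (mkposreal d Hd). intros u v Hu Hv. exact (Hc (u, v) Hu Hv).
Qed.

Lemma locally_2d_open2 (U : pt -> Prop) (x y : R) :
  open2 U -> U (x, y) -> locally_2d (fun u v => U (u, v)) x y.
Proof.
  intros HU Hp. destruct (HU _ Hp) as [r [Hr Hbox]].
  exists (mkposreal r Hr). intros u v Hu Hv. exact (Hbox (u, v) Hu Hv).
Qed.

Lemma mixed_partial_uv (U : pt -> Prop) (h : pt -> R) (u v : R) :
  open2 U -> smooth_on U h -> U (u, v) ->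
  is_derive (fun z => Derive (fun t => h (z, t)) v) u (pd 0 (pd 1 h) (u, v)).
Proof.
  intros HU Hs Huv. destruct (HU _ Huv) as [r [Hr Hbox]]. apply is_derive_Reals.
  apply (derivable_pt_lim_near (fun z => pd 1 h (z, v)) _ _ r _ Hr).
  - intros z Hz. symmetry. apply is_derive_unique, is_derive_Reals.
    apply (smooth_on_pd_spec U h 1 (z, v) Hs), Hbox; simpl;
      rewrite ?Rminus_diag, ?Rabs_R0; assumption.
  - exact (smooth_on_pd_spec U (pd 1 h) 0 (u, v) (smooth_on_itd U h (1 :: nil)%nat Hs) Huv).
Qed.

Lemma mixed_partial_vu (U : pt -> Prop) (h : pt -> R) (u v : R) :
  open2 U -> smooth_on U h -> U (u, v) ->
  is_derive (fun z => Derive (fun t => h (t, z)) u) v (pd 1 (pd 0 h) (u, v)).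
Proof.
  intros HU Hs Huv. destruct (HU _ Huv) as [r [Hr Hbox]]. apply is_derive_Reals.
  apply (derivable_pt_lim_near (fun z => pd 0 h (u, z)) _ _ r _ Hr).
  - intros z Hz. symmetry. apply is_derive_unique, is_derive_Reals.
    apply (smooth_on_pd_spec U h 0 (u, z) Hs), Hbox; simpl;
      rewrite ?Rminus_diag, ?Rabs_R0; assumption.
  - exact (smooth_on_pd_spec U (pd 0 h) 1 (u, v) (smooth_on_itd U h (0 :: nil)%nat Hs) Huv).
Qed.

Lemma pd_comm (U : pt -> Prop) (h : pt -> R) (p : pt) :
  open2 U -> smooth_on U h -> U p -> pd 0 (pd 1 h) p = pd 1 (pd 0 h) p.
Proof.
  intros HU Hs Hp. destruct p as [x y].
  assert (Hbox := locally_2d_open2 U x y HU Hp).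
  assert (Huv : forall u v, U (u, v) ->
    Derive (fun z => Derive (fun t => h (z, t)) v) u = pd 0 (pd 1 h) (u, v))
    by (intros; apply is_derive_unique, (mixed_partial_uv U); auto).
  assert (Hvu : forall u v, U (u, v) ->
    Derive (fun z => Derive (fun t => h (t, z)) u) v = pd 1 (pd 0 h) (u, v))
    by (intros; apply is_derive_unique, (mixed_partial_vu U); auto).
  rewrite <- (Huv x y Hp), <- (Hvu x y Hp).
  apply (Schwarz (fun u v => h (u, v))).
  - apply (locally_2d_impl (fun u v => U (u, v))); [| exact Hbox].
    apply locally_2d_forall. intros u v Hp'.
    repeat split; eexists; apply is_derive_Reals.
    + exact (smooth_on_pd_spec U h 0 (u, v) Hs Hp').
    + exact (smooth_on_pd_spec U h 1 (u, v) Hs Hp').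
    + apply is_derive_Reals, (mixed_partial_uv U); auto.
    + apply is_derive_Reals, (mixed_partial_vu U); auto.
  - apply (continuity_2d_pt_ext_loc (fun u v => pd 0 (pd 1 h) (u, v))).
    + apply (locally_2d_impl (fun u v => U (u, v))); [| exact Hbox].
      apply locally_2d_forall. intros u v Hp'. symmetry. auto.
    + apply continuity_2d_pt_of_continuous_at2. exact (proj1 (Hs (0 :: 1 :: nil)%nat _ Hp)).
  - apply (continuity_2d_pt_ext_loc (fun u v => pd 1 (pd 0 h) (u, v))).
    + apply (locally_2d_impl (fun u v => U (u, v))); [| exact Hbox].
      apply locally_2d_forall. intros u v Hp'. symmetry. auto.
    + apply continuity_2d_pt_of_continuous_at2. exact (proj1 (Hs (1 :: 0 :: nil)%nat _ Hp)).
Qed.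

Lemma smooth_on_differentiable (U : pt -> Prop) (h : pt -> R) (x y : R) :
  open2 U -> smooth_on U h -> U (x, y) ->
  differentiable_pt_lim (fun u v => h (u, v)) x y (pd 0 h (x, y)) (pd 1 h (x, y)).
Proof.
  intros HU Hs Hp. apply filterdiff_differentiable_pt_lim.
  eapply filterdiff_ext_lin.
  - apply (is_derive_filterdiff (fun u v => h (u, v)) x y (fun u v => pd 0 h (u, v))).
    + apply (proj1 (locally_2d_locally
        (fun u v => is_derive (fun z => h (z, v)) u (pd 0 h (u, v))) x y)).
      apply (locally_2d_impl (fun u v => U (u, v))); [| exact (locally_2d_open2 U x y HU Hp)].
      apply locally_2d_forall. intros u v Huv.
      apply is_derive_Reals. exact (smooth_on_pd_spec U h 0 (u, v) Hs Huv).
    + apply is_derive_Reals. exact (smooth_on_pd_spec U h 1 (x, y) Hs Hp).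
    + apply (continuity_2d_pt_filterlim (fun u v => pd 0 h (u, v))).
      apply continuity_2d_pt_of_continuous_at2. exact (proj1 (Hs (0 :: nil)%nat _ Hp)).
  - intros [u v]. reflexivity.
Qed.

Definition is_dir_derive (h : pt -> R) (p : pt) (v0 v1 l : R) : Prop :=
  is_derive (fun s => h (fst p + s * v0, snd p + s * v1)) 0 l.

Lemma smooth_on_dir_derive (U : pt -> Prop) (h : pt -> R) (p : pt) (v0 v1 : R) :
  open2 U -> smooth_on U h -> U p ->
  is_dir_derive h p v0 v1 (v0 * pd 0 h p + v1 * pd 1 h p).
Proof.
  intros HU Hs Hp. destruct p as [x y]. unfold is_dir_derive; cbn [fst snd].
  apply is_derive_Reals.
  replace (v0 * pd 0 h (x, y) + v1 * pd 1 h (x, y))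
    with (pd 0 h (x, y) * v0 + pd 1 h (x, y) * v1) by ring.
  apply (derivable_pt_lim_comp_2d (fun u v => h (u, v)) (fun s => x + s * v0)
           (fun s => y + s * v1) 0 (pd 0 h (x, y)) (pd 1 h (x, y))).
  - replace (x + 0 * v0) with x by ring. replace (y + 0 * v1) with y by ring.
    exact (smooth_on_differentiable U h x y HU Hs Hp).
  - apply is_derive_Reals. auto_derive; auto; ring.
  - apply is_derive_Reals. auto_derive; auto; ring.
Qed.

Lemma open2_segment (U : pt -> Prop) (p : pt) (v0 v1 : R) : open2 U -> U p ->
  exists r, 0 < r /\ forall s, Rabs s < r -> U (fst p + s * v0, snd p + s * v1).
Proof.
  intros HU Hp. destruct (HU p Hp) as [r [Hr Hbox]].
  set (M := Rabs v0 + Rabs v1 + 1).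
  assert (HM : 0 < M) by (unfold M; pose proof (Rabs_pos v0); pose proof (Rabs_pos v1); lra).
  exists (r / M). split; [apply Rdiv_lt_0_compat; assumption |].
  intros s Hs.
  assert (HsM : Rabs s * M < r).
  { apply (Rmult_lt_compat_r M) in Hs; [| exact HM].
    unfold Rdiv in Hs. rewrite Rmult_assoc, Rinv_l, Rmult_1_r in Hs by lra. exact Hs. }
  pose proof (Rabs_pos s). pose proof (Rabs_pos v0). pose proof (Rabs_pos v1).
  unfold M in HsM. apply Hbox; simpl.
  - replace (fst p + s * v0 - fst p) with (s * v0) by ring. rewrite Rabs_mult. nra.
  - replace (snd p + s * v1 - snd p) with (s * v1) by ring. rewrite Rabs_mult. nra.
Qed.

Lemma is_dir_derive_local (U : pt -> Prop) (h1 h2 : pt -> R) (p : pt) (v0 v1 l : R) :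
  open2 U -> U p -> (forall q, U q -> h1 q = h2 q) ->
  is_dir_derive h1 p v0 v1 l -> is_dir_derive h2 p v0 v1 l.
Proof.
  intros HU Hp Heq H. destruct (open2_segment U p v0 v1 HU Hp) as [r [Hr Hseg]].
  unfold is_dir_derive in *. apply is_derive_Reals. apply is_derive_Reals in H.
  refine (derivable_pt_lim_near _ _ _ r _ Hr _ H).
  intros s Hs. rewrite Rminus_0_r in Hs. apply Heq, Hseg, Hs.
Qed.

Lemma is_dir_derive_const (c : R) (p : pt) (v0 v1 : R) :
  is_dir_derive (fun _ => c) p v0 v1 0.
Proof. exact (is_derive_const c 0). Qed.

Lemma is_dir_derive_unique (h : pt -> R) (p : pt) (v0 v1 l1 l2 : R) :
  is_dir_derive h p v0 v1 l1 -> is_dir_derive h p v0 v1 l2 -> l1 = l2.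
Proof.
  unfold is_dir_derive. intros H1 H2.
  rewrite <- (is_derive_unique _ _ _ H1). exact (is_derive_unique _ _ _ H2).
Qed.

(** * Rational expressions in the jets of the parametrisation *)

(* [JDot a b c d] stands for <d_u^a d_v^b X, d_u^c d_v^d X>, [JDotZ a b] for
   <d_u^a d_v^b X, Z> and [JW i] for the i-th coordinate of W. *)
Inductive jexpr :=
  | JDot (a b c d : nat)
  | JDotZ (a b : nat)
  | JW (i : nat)
  | JConst (r : R)
  | JAdd (x y : jexpr)
  | JMul (x y : jexpr)
  | JInv (x : jexpr)
  | JOpp (x : jexpr).

Definition JSub (x y : jexpr) : jexpr := JAdd x (JOpp y).

(* Formal partial derivative; W is not assumed differentiable in the
   coordinates, so [jderiv] is only meaningful on W-free expressions. *)
Fixpoint jderiv (i : nat) (e : jexpr) : jexpr :=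
  match e with
  | JDot a b c d =>
      match i with
      | O => JAdd (JDot (S a) b c d) (JDot a b (S c) d)
      | S _ => JAdd (JDot a (S b) c d) (JDot a b c (S d))
      end
  | JDotZ a b => match i with O => JDotZ (S a) b | S _ => JDotZ a (S b) end
  | JW _ | JConst _ => JConst 0
  | JAdd x y => JAdd (jderiv i x) (jderiv i y)
  | JMul x y => JAdd (JMul (jderiv i x) y) (JMul x (jderiv i y))
  | JInv x => JMul (JOpp (jderiv i x)) (JMul (JInv x) (JInv x))
  | JOpp x => JOpp (jderiv i x)
  end.

Section Evaluation.
Variables (dots : nat -> nat -> nat -> nat -> R) (zdots : nat -> nat -> R) (w : nat -> R).

Fixpoint jeval (e : jexpr) : R :=
  match e with
  | JDot a b c d => dots a b c d
  | JDotZ a b => zdots a b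
  | JW i => w i
  | JConst r => r
  | JAdd x y => jeval x + jeval y
  | JMul x y => jeval x * jeval y
  | JInv x => / jeval x
  | JOpp x => - jeval x
  end.

(* The derivative of [jeval e] in the direction (v0, v1), given the
   derivatives [dw] of the coordinates of W in that direction. *)
Variables (v0 v1 : R) (dw : nat -> R).

Fixpoint jeval_dir (e : jexpr) : R :=
  match e with
  | JDot a b c d =>
      v0 * (dots (S a) b c d + dots a b (S c) d) + v1 * (dots a (S b) c d + dots a b c (S d))
  | JDotZ a b => v0 * zdots (S a) b + v1 * zdots a (S b)
  | JW i => dw i
  | JConst _ => 0
  | JAdd x y => jeval_dir x + jeval_dir y
  | JMul x y => jeval_dir x * jeval y + jeval x * jeval_dir y
  | JInv x => - jeval_dir x * / (jeval x * jeval x)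
  | JOpp x => - jeval_dir x
  end.

End Evaluation.

Lemma jeval_ext (dots dots' : nat -> nat -> nat -> nat -> R) zdots w (e : jexpr) :
  (forall a b c d, dots a b c d = dots' a b c d) ->
  jeval dots zdots w e = jeval dots' zdots w e.
Proof. intros H. induction e; simpl; congruence. Qed.

Lemma jeval_dir_ext (dots dots' : nat -> nat -> nat -> nat -> R) zdots w v0 v1 dw
  (e : jexpr) :
  (forall a b c d, dots a b c d = dots' a b c d) ->
  jeval_dir dots zdots w v0 v1 dw e = jeval_dir dots' zdots w v0 v1 dw e.
Proof.
  intros H. induction e; simpl; rewrite ?IHe, ?IHe1, ?IHe2, ?H;
    rewrite ?(jeval_ext dots dots'); auto.
Qed.

(* Symmetrising the Gram valuation makes <A, B> and <B, A> the same term, so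
   that [ring] and [field] see the symmetry of the metric. *)
Definition symmetrize (dots : nat -> nat -> nat -> nat -> R) (a b c d : nat) : R :=
  if Nat.leb (a * 10 + b) (c * 10 + d) then dots a b c d else dots c d a b.

(* The coordinate vector X_i is the jet of order (idx_u i, idx_v i). *)
Definition idx_u (i : nat) : nat := match i with O => 1%nat | _ => 0%nat end.
Definition idx_v (i : nat) : nat := match i with O => 0%nat | _ => 1%nat end.

Definition metricE (i j : nat) : jexpr := JDot (idx_u i) (idx_v i) (idx_u j) (idx_v j).
Definition detE : jexpr :=
  JSub (JMul (metricE 0 0) (metricE 1 1)) (JMul (metricE 0 1) (metricE 0 1)).
Definition ginvE (k l : nat) : jexpr :=
  match k, l with
  | O, O => JMul (metricE 1 1) (JInv detE)
  | S _, S _ => JMul (metricE 0 0) (JInv detE)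
  | _, _ => JMul (JOpp (metricE 0 1)) (JInv detE)
  end.
Definition ChrE (k i j : nat) : jexpr :=
  JMul (JConst (/ 2))
    (JAdd (JMul (ginvE k 0) (JSub (JAdd (jderiv i (metricE j 0)) (jderiv j (metricE i 0)))
                                  (jderiv 0 (metricE i j))))
          (JMul (ginvE k 1) (JSub (JAdd (jderiv i (metricE j 1)) (jderiv j (metricE i 1)))
                                  (jderiv 1 (metricE i j))))).
Definition RupE (l i j k : nat) : jexpr :=
  JSub (JAdd (JSub (jderiv i (ChrE l j k)) (jderiv j (ChrE l i k)))
             (JAdd (JMul (ChrE 0 j k) (ChrE l i 0)) (JMul (ChrE 1 j k) (ChrE l i 1))))
       (JAdd (JMul (ChrE 0 i k) (ChrE l j 0)) (JMul (ChrE 1 i k) (ChrE l j 1))).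
Definition GaussKE : jexpr :=
  JMul (JAdd (JMul (metricE 0 0) (RupE 0 0 1 1)) (JMul (metricE 1 0) (RupE 1 0 1 1)))
       (JInv detE).

Definition metric_formE (u0 u1 v0 v1 : jexpr) : jexpr :=
  JAdd (JAdd (JAdd (JMul (JMul u0 v0) (metricE 0 0)) (JMul (JMul u0 v1) (metricE 0 1)))
             (JMul (JMul u1 v0) (metricE 1 0)))
       (JMul (JMul u1 v1) (metricE 1 1)).

Definition zdotE (i : nat) : jexpr := JDotZ (idx_u i) (idx_v i).
Definition ztanE (k : nat) : jexpr :=
  JAdd (JMul (ginvE k 0) (zdotE 0)) (JMul (ginvE k 1) (zdotE 1)).

Definition ZTnormE : jexpr := metric_formE (ztanE 0) (ztanE 1) (ztanE 0) (ztanE 1).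
Definition WnormE : jexpr := metric_formE (JW 0) (JW 1) (JW 0) (JW 1).
Definition ZTWE : jexpr := metric_formE (ztanE 0) (ztanE 1) (JW 0) (JW 1).
Definition ZWE : jexpr := JAdd (JMul (zdotE 0) (JW 0)) (JMul (zdotE 1) (JW 1)).

(* [ZTnormE] with the denominator [detE] cleared. *)
Definition ZTnorm_detE : jexpr :=
  JSub (JAdd (JMul (metricE 1 1) (JMul (zdotE 0) (zdotE 0)))
             (JMul (metricE 0 0) (JMul (zdotE 1) (zdotE 1))))
       (JMul (JConst 2) (JMul (metricE 0 1) (JMul (zdotE 0) (zdotE 1)))).

Definition wwE (F : nat -> nat -> jexpr) : jexpr :=
  JAdd (JAdd (JAdd (JMul (JMul (JW 0) (JW 0)) (F 0%nat 0%nat))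
                   (JMul (JMul (JW 0) (JW 1)) (F 0%nat 1%nat)))
             (JMul (JMul (JW 1) (JW 0)) (F 1%nat 0%nat)))
       (JMul (JMul (JW 1) (JW 1)) (F 1%nat 1%nat)).

Definition second_jetsE (F : nat -> nat -> jexpr) : jexpr :=
  wwE (fun i j => F (idx_u i + idx_u j)%nat (idx_v i + idx_v j)%nat).

Definition jet_tanE (a b k : nat) : jexpr :=
  JAdd (JMul (ginvE k 0) (JDot a b 1 0)) (JMul (ginvE k 1) (JDot a b 0 1)).
Definition jet_perp_dotE (a b : nat) : jexpr :=
  JAdd (JSub (JSub (JDotZ a b)
                   (JAdd (JMul (ztanE 0) (JDot a b 1 0)) (JMul (ztanE 1) (JDot a b 0 1))))
             (JAdd (JMul (jet_tanE a b 0) (zdotE 0)) (JMul (jet_tanE a b 1) (zdotE 1))))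
       (metric_formE (jet_tanE a b 0) (jet_tanE a b 1) (ztanE 0) (ztanE 1)).
Definition jet_dot_ZperpE (a b : nat) : jexpr :=
  JSub (JDotZ a b)
       (JAdd (JMul (ztanE 0) (JDot a b 1 0)) (JMul (ztanE 1) (JDot a b 0 1))).

Definition aE : jexpr := second_jetsE jet_dot_ZperpE.

Definition dirWE (e : jexpr) : jexpr :=
  JAdd (JMul (JW 0) (jderiv 0 e)) (JMul (JW 1) (jderiv 1 e)).
Definition hessWWE (e : jexpr) : jexpr :=
  wwE (fun l m => JSub (jderiv l (jderiv m e))
                       (JAdd (JMul (ChrE 0 l m) (jderiv 0 e)) (JMul (ChrE 1 l m) (jderiv 1 e)))).
Definition dd_detE (e : jexpr) : jexpr :=
  wwE (fun l m => JMul (jderiv l e) (jderiv m detE)).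

Definition zdot_normE : jexpr := JAdd (JMul (zdotE 0) (zdotE 0)) (JMul (zdotE 1) (zdotE 1)).
Definition WsolE (i : nat) : jexpr :=
  let Y j := JMul (JOpp (zdotE j)) (JInv zdot_normE) in
  JAdd (Y i) (JMul (JMul (JConst (/ 2)) (metric_formE (Y 0%nat) (Y 1%nat) (Y 0%nat) (Y 1%nat)))
                   (ztanE i)).

(** * The algebra of a null frame *)

Section NullFrame.
Variables (dots : nat -> nat -> nat -> nat -> R) (zdots : nat -> nat -> R) (w : nat -> R).

Local Notation val := (jeval (symmetrize dots) zdots w).

Definition null_frame : Prop :=
  val detE <> 0 /\ val ZTnormE = 0 /\ val WnormE = 0 /\ val ZTWE = -1 /\
  (val (ztanE 0) <> 0 \/ val (ztanE 1) <> 0).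

(* With t the coordinates of Z^T, the Gram matrix of (Z^T, W) is
   [[0, -1], [-1, 0]]; inverting the change of basis gives the metric. *)
Lemma null_frame_metric : null_frame ->
  exists t0 t1, t0 * w 1%nat - t1 * w 0%nat <> 0 /\
    dots 1%nat 0%nat 1%nat 0%nat
      = 2 * w 1%nat * t1 / ((t0 * w 1%nat - t1 * w 0%nat) * (t0 * w 1%nat - t1 * w 0%nat)) /\
    dots 0%nat 1%nat 1%nat 0%nat
      = - (w 1%nat * t0 + t1 * w 0%nat)
        / ((t0 * w 1%nat - t1 * w 0%nat) * (t0 * w 1%nat - t1 * w 0%nat)) /\
    dots 0%nat 1%nat 0%nat 1%nat
      = 2 * w 0%nat * t0 / ((t0 * w 1%nat - t1 * w 0%nat) * (t0 * w 1%nat - t1 * w 0%nat)) /\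
    zdots 1%nat 0%nat = t1 / (t0 * w 1%nat - t1 * w 0%nat) /\
    zdots 0%nat 1%nat = - t0 / (t0 * w 1%nat - t1 * w 0%nat).
Proof.
  intros [Hdet [HC0 [HE1 [HE2 Ht]]]].
  cbn -[Rinv] in *. unfold symmetrize in *; cbn -[Rinv] in *.
  set (w0 := w 0%nat) in *. set (w1 := w 1%nat) in *.
  set (g00 := dots 1%nat 0%nat 1%nat 0%nat) in *.
  set (g01 := dots 0%nat 1%nat 1%nat 0%nat) in *.
  set (g11 := dots 0%nat 1%nat 0%nat 1%nat) in *.
  set (f0 := zdots 1%nat 0%nat) in *.
  set (f1 := zdots 0%nat 1%nat) in *.
  clearbody g00 g01 g11 f0 f1 w0 w1.
  set (t0 := g11 * / (g00 * g11 + - (g01 * g01)) * f0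
             + - g01 * / (g00 * g11 + - (g01 * g01)) * f1) in *.
  set (t1 := - g01 * / (g00 * g11 + - (g01 * g01)) * f0
             + g00 * / (g00 * g11 + - (g01 * g01)) * f1) in *.
  assert (Hf0 : f0 = g00 * t0 + g01 * t1) by (unfold t0, t1; field; exact Hdet).
  assert (Hf1 : f1 = g01 * t0 + g11 * t1) by (unfold t0, t1; field; exact Hdet).
  clearbody t0 t1.
  assert (HC : g00*t0*t0 + 2*g01*t0*t1 + g11*t1*t1 = 0) by (rewrite <- HC0; ring).
  assert (HE : g00*t0*w0 + g01*(t0*w1 + t1*w0) + g11*t1*w1 = -1) by (rewrite <- HE2; ring).
  assert (HW : w0*w0*g00 + w0*w1*g01 + w1*w0*g01 + w1*w1*g11 = 0) by (rewrite <- HE1; ring).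
  clear HC0 HE1 HE2.
  assert (HD : t0*w1 - t1*w0 <> 0).
  { intro HD0.
    assert (A0 : t0 * (g00*t0*w0 + g01*(t0*w1 + t1*w0) + g11*t1*w1)
                 = w0 * (g00*t0*t0 + 2*g01*t0*t1 + g11*t1*t1)
                   + g01*t0*(t0*w1 - t1*w0) + g11*t1*(t0*w1 - t1*w0)) by ring.
    assert (A1 : t1 * (g00*t0*w0 + g01*(t0*w1 + t1*w0) + g11*t1*w1)
                 = w1 * (g00*t0*t0 + 2*g01*t0*t1 + g11*t1*t1)
                   - g00*t0*(t0*w1 - t1*w0) - g01*t1*(t0*w1 - t1*w0)) by ring.
    rewrite HE, HC, HD0 in A0, A1.
    destruct Ht; lra. }
  exists t0, t1. split; [exact HD|].
  set (D := t0*w1 - t1*w0) in *.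
  assert (Hg00 : g00 = 2*w1*t1/(D*D)).
  { assert (H : g00 * (D*D) = w1*w1*(g00*t0*t0 + 2*g01*t0*t1 + g11*t1*t1)
       - 2*w1*t1*(g00*t0*w0 + g01*(t0*w1 + t1*w0) + g11*t1*w1)
       + t1*t1*(w0*w0*g00 + w0*w1*g01 + w1*w0*g01 + w1*w1*g11)) by (unfold D; ring).
    rewrite HC, HE, HW in H. field_simplify_eq; [lra | exact HD]. }
  assert (Hg11 : g11 = 2*w0*t0/(D*D)).
  { assert (H : g11 * (D*D) = w0*w0*(g00*t0*t0 + 2*g01*t0*t1 + g11*t1*t1)
       - 2*w0*t0*(g00*t0*w0 + g01*(t0*w1 + t1*w0) + g11*t1*w1)
       + t0*t0*(w0*w0*g00 + w0*w1*g01 + w1*w0*g01 + w1*w1*g11)) by (unfold D; ring).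
    rewrite HC, HE, HW in H. field_simplify_eq; [lra | exact HD]. }
  assert (Hg01 : g01 = -(w1*t0 + t1*w0)/(D*D)).
  { assert (H : g01 * (D*D) = -w1*w0*(g00*t0*t0 + 2*g01*t0*t1 + g11*t1*t1)
       + (w1*t0 + t1*w0)*(g00*t0*w0 + g01*(t0*w1 + t1*w0) + g11*t1*w1)
       - t1*t0*(w0*w0*g00 + w0*w1*g01 + w1*w0*g01 + w1*w1*g11)) by (unfold D; ring).
    rewrite HC, HE, HW in H. field_simplify_eq; [lra | exact HD]. }
  repeat split; auto.
  - rewrite Hf0, Hg00, Hg01. unfold D. field. exact HD.
  - rewrite Hf1, Hg11, Hg01. unfold D. field. exact HD.
Qed.

(* W is only assumed to be a function; the frame conditions express it as a
   rational function of the first jets, which is what makes Z^T(a) exist. *)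
Lemma null_partner_eq : null_frame ->
  val zdot_normE <> 0 /\ w 0%nat = val (WsolE 0) /\ w 1%nat = val (WsolE 1).
Proof.
  intros Hframe.
  destruct (null_frame_metric Hframe) as [t0 [t1 [HD [H1 [H2 [H3 [H4 H5]]]]]]].
  assert (Htt : t0 * t0 + t1 * t1 <> 0).
  { intro H0. assert (t0 = 0) by nra. assert (t1 = 0) by nra. subst.
    apply HD. ring. }
  cbn -[Rinv]. unfold symmetrize; cbn -[Rinv].
  rewrite H1, H2, H3, H4, H5.
  set (w0 := w 0%nat) in *. set (w1 := w 1%nat) in *.
  clearbody w0 w1.
  assert (HDD : (t0*w1 - t1*w0) * (t0*w1 - t1*w0) <> 0)
    by (intro H0; apply HD; destruct (Rmult_integral _ _ H0); auto).
  assert (Hsq : 2 * w1 * t1 * (2 * w0 * t0)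
                + - (- (w1 * t0 + t1 * w0) * - (w1 * t0 + t1 * w0)) <> 0)
    by (intro H0; apply HDD; nra).
  assert (Htt' : t1 * t1 + - t0 * - t0 <> 0) by (intro; apply Htt; nra).
  split; [|split].
  - intro H0. apply Htt.
    match type of H0 with ?L = 0 =>
      transitivity (L * ((t0*w1 - t1*w0) * (t0*w1 - t1*w0)));
        [field; exact HD | rewrite H0; ring] end.
  - field. auto.
  - field. auto.
Qed.

Lemma aE_perp_proj : val detE <> 0 -> val (second_jetsE jet_perp_dotE) = val aE.
Proof.
  intros Hd. cbn -[Rinv] in *. unfold symmetrize in *. cbn -[Rinv] in *.
  field. exact Hd.
Qed.

Lemma ZTWE_eq : val detE <> 0 -> val ZTWE = val ZWE.
Proof.
  intros Hd. cbn -[Rinv] in *. unfold symmetrize in *. cbn -[Rinv] in *.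
  field. exact Hd.
Qed.

Lemma ZTnorm_detE_eq : val detE <> 0 -> val ZTnorm_detE = val detE * val ZTnormE.
Proof.
  intros Hd. cbn -[Rinv] in *. unfold symmetrize in *. cbn -[Rinv] in *.
  field. exact Hd.
Qed.

Variable dw : nat -> R.

Local Notation der e :=
  (jeval_dir (symmetrize dots) zdots w (val (ztanE 0)) (val (ztanE 1)) dw e).

(* Every term on the right is a derivative of one of the constraints
   |Z^T|^2 = 0, |W|^2 = 0 and <Z, W> = -1. *)
Lemma gauss_curvature_defect : null_frame ->
  der aE - val GaussKE =
    / 2 * val (hessWWE ZTnorm_detE) / val detE
    - val (dd_detE ZTnorm_detE) / (val detE * val detE)
    + 2 * val aE * val (dirWE ZTnorm_detE) / val detE
    - / 2 * val (dirWE ZTnorm_detE) / val detE * der WnormE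
    - 2 * val aE * der ZWE.
Proof.
  intros Hframe.
  destruct (null_frame_metric Hframe) as [s0 [s1 [HD [H1 [H2 [H3 [H4 H5]]]]]]].
  clear Hframe.
  cbn -[Rinv] in *.
  unfold symmetrize in *; cbn -[Rinv] in *.
  rewrite H1, H2, H3, H4, H5.
  set (w0 := w 0%nat) in *. set (w1 := w 1%nat) in *.
  set (dw0 := dw 0%nat) in *. set (dw1 := dw 1%nat) in *.
  clearbody w0 w1 dw0 dw1.
  (* Naming 1/D and inverting the metric determinant by hand keeps [field] tractable. *)
  unfold Rdiv.
  remember (/ (s0 * w1 - s1 * w0)) as e eqn:He.
  assert (Hee : / ((s0 * w1 - s1 * w0) * (s0 * w1 - s1 * w0)) = e * e)
    by (rewrite He; field; exact HD).
  rewrite Hee.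
  assert (Hdt : / (2 * w1 * s1 * (e * e) * (2 * w0 * s0 * (e * e)) +
     - (- (w1 * s0 + s1 * w0) * (e * e) * (- (w1 * s0 + s1 * w0) * (e * e))))
     = - ((s0 * w1 - s1 * w0) * (s0 * w1 - s1 * w0))).
  { rewrite He. field. split; [exact HD|]. intro H0. apply HD.
    assert (E : (s0*w1 - s1*w0) * (s0*w1 - s1*w0) = 0) by nra.
    destruct (Rmult_integral _ _ E); auto. }
  assert (Hdt2 : / ((2 * w1 * s1 * (e * e) * (2 * w0 * s0 * (e * e)) +
     - (- (w1 * s0 + s1 * w0) * (e * e) * (- (w1 * s0 + s1 * w0) * (e * e)))) *
     (2 * w1 * s1 * (e * e) * (2 * w0 * s0 * (e * e)) +
     - (- (w1 * s0 + s1 * w0) * (e * e) * (- (w1 * s0 + s1 * w0) * (e * e)))))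
     = ((s0 * w1 - s1 * w0) * (s0 * w1 - s1 * w0)) * ((s0 * w1 - s1 * w0) * (s0 * w1 - s1 * w0))).
  { rewrite Rinv_mult, Hdt. ring. }
  rewrite Hdt2, Hdt.
  clear H1 H2 H3 H4 H5 Hdt Hee Hdt2.
  apply Rminus_diag_uniq.
  ring_simplify.
  subst e.
  field.
  exact HD.
Qed.

End NullFrame.

Lemma constraint_terms_vanish (dots : nat -> nat -> nat -> nat -> R) zdots w (e : jexpr) :
  (forall k, jeval dots zdots w (jderiv k e) = 0) ->
  (forall l m, jeval dots zdots w (jderiv l (jderiv m e)) = 0) ->
  jeval dots zdots w (hessWWE e) = 0 /\ jeval dots zdots w (dd_detE e) = 0 /\
  jeval dots zdots w (dirWE e) = 0.
Proof.
  intros H1 H2. split; [|split].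
  - cbn [jeval hessWWE wwE JSub]. rewrite !H1, !H2. ring.
  - cbn [jeval dd_detE wwE]. rewrite !H1. ring.
  - cbn [jeval dirWE]. rewrite !H1. ring.
Qed.

(** * Jets of a parametrised surface *)

(* [itd (word a b)] is d_u^a d_v^b, with the v-derivatives taken first. *)
Definition word (a b : nat) : list nat := repeat 0%nat a ++ repeat 1%nat b.

Ltac exact_with_value H :=
  match type of H with is_derive _ _ ?l =>
    match goal with |- is_derive _ _ ?l' => replace l' with l; [exact H |] end
  end.

Section Surface.
Variables (n : nat) (U : pt -> Prop) (X : pt -> vec) (Z : vec) (w0 w1 : pt -> R).
Hypothesis HU : open2 U.
Hypothesis HX : forall k, smooth_on U (fun p => X p k).

Definition jet (a b k : nat) : pt -> R := itd (word a b) (fun q => X q k).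
Definition jet_vec (a b : nat) (q : pt) : vec := fun k => jet a b k q.

Definition gram (q : pt) (a b c d : nat) : R := minner n (jet_vec a b q) (jet_vec c d q).
Definition zgram (q : pt) (a b : nat) : R := minner n (jet_vec a b q) Z.
Definition wcoord (q : pt) (i : nat) : R := match i with O => w0 q | S _ => w1 q end.
Definition jval (q : pt) (e : jexpr) : R := jeval (gram q) (zgram q) (wcoord q) e.

Lemma pd_v_jet (a b k : nat) (q : pt) : U q -> pd 1 (jet a b k) q = jet a (S b) k q.
Proof.
  revert q. induction a as [|a IH]; intros q Hq; [reflexivity |].
  change (pd 1 (pd 0 (jet a b k)) q = pd 0 (jet a (S b) k) q).
  rewrite <- (pd_comm U (jet a b k) q HU (smooth_on_itd U _ _ (HX k)) Hq).
  exact (pd_local U _ _ 0 q HU Hq IH).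
Qed.

Lemma jet_coord_spec (a b k i : nat) (q : pt) : U q ->
  is_derive (fun s => jet a b k (coord_line i q s)) (coord i q)
    (match i with O => jet (S a) b k q | S _ => jet a (S b) k q end).
Proof.
  intros Hq. apply is_derive_Reals.
  assert (H := smooth_on_pd_spec U (jet a b k) i q (smooth_on_itd U _ _ (HX k)) Hq).
  destruct i as [|i]; [exact H |].
  change (pd (S i) (jet a b k) q) with (pd 1 (jet a b k) q) in H.
  rewrite pd_v_jet in H; assumption.
Qed.

Lemma jet_dir_spec (a b k : nat) (p : pt) (v0 v1 : R) : U p ->
  is_dir_derive (jet a b k) p v0 v1 (v0 * jet (S a) b k p + v1 * jet a (S b) k p).
Proof.
  intros Hp. assert (H := smooth_on_dir_derive U (jet a b k) p v0 v1 HU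
                            (smooth_on_itd U _ _ (HX k)) Hp).
  rewrite pd_v_jet in H by exact Hp. exact H.
Qed.

Fixpoint wfree (e : jexpr) : Prop :=
  match e with
  | JW _ => False
  | JAdd x y | JMul x y => wfree x /\ wfree y
  | JInv x | JOpp x => wfree x
  | _ => True
  end.

Fixpoint jdefined (q : pt) (e : jexpr) : Prop :=
  match e with
  | JAdd x y | JMul x y => jdefined q x /\ jdefined q y
  | JInv x => jdefined q x /\ jval q x <> 0
  | JOpp x => jdefined q x
  | _ => True
  end.

Lemma jval_coord_spec (e : jexpr) (q : pt) (i : nat) : U q -> wfree e -> jdefined q e ->
  is_derive (fun s => jval (coord_line i q s) e) (coord i q) (jval q (jderiv i e)).
Proof.
  intros Hq. destruct q as [q1 q2].
  assert (HL : coord_line i (q1, q2) (coord i (q1, q2)) = (q1, q2)) by (destruct i; reflexivity).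
  assert (Hjet : forall a b k, is_derive (fun s => jet_vec a b (coord_line i (q1, q2) s) k)
     (coord i (q1, q2))
     (match i with O => jet_vec (S a) b (q1, q2) | S _ => jet_vec a (S b) (q1, q2) end k))
    by (intros; destruct i; exact (jet_coord_spec _ _ k _ _ Hq)).
  induction e; simpl; intros Hfree Hdef.
  - assert (H := is_derive_minner n _ _ _ _ _ (Hjet a b) (Hjet c d)).
    cbv beta in H. rewrite HL in H. destruct i; exact H.
  - assert (H := is_derive_minner_const_r n _ _ Z _ (Hjet a b)).
    destruct i; exact H.
  - contradiction.
  - exact (is_derive_const _ _).
  - exact (is_derive_plus _ _ _ _ _ (IHe1 (proj1 Hfree) (proj1 Hdef))
                                    (IHe2 (proj2 Hfree) (proj2 Hdef))).
  - assert (H := is_derive_mult _ _ _ _ _ (IHe1 (proj1 Hfree) (proj1 Hdef))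
                                          (IHe2 (proj2 Hfree) (proj2 Hdef)) Rmult_comm).
    cbv beta in H. rewrite HL in H. exact H.
  - destruct Hdef as [Hdef Hnz].
    assert (Hnz' : jval (coord_line i (q1, q2) (coord i (q1, q2))) e <> 0)
      by (rewrite HL; exact Hnz).
    assert (H := is_derive_inv _ _ _ (IHe Hfree Hdef) Hnz'). cbv beta in H. rewrite HL in H.
    exact_with_value H. unfold jval. field. exact Hnz.
  - exact (is_derive_opp _ _ _ (IHe Hfree Hdef)).
Qed.

Lemma pd_jval (e : jexpr) (q : pt) (i : nat) : U q -> wfree e -> jdefined q e ->
  pd i (fun r => jval r e) q = jval q (jderiv i e).
Proof.
  intros Hq Hfree Hdef. apply pd_unique, is_derive_Reals, jval_coord_spec; assumption.
Qed.

Lemma jval_dir_spec (e : jexpr) (p : pt) (v0 v1 : R) (dw : nat -> R) : U p ->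
  (forall i, is_dir_derive (fun q => wcoord q i) p v0 v1 (dw i)) -> jdefined p e ->
  is_dir_derive (fun q => jval q e) p v0 v1 (jeval_dir (gram p) (zgram p) (wcoord p) v0 v1 dw e).
Proof.
  intros Hp Hw. unfold is_dir_derive in *.
  assert (HL : (fst p + 0 * v0, snd p + 0 * v1) = p) by (destruct p; simpl; f_equal; ring).
  induction e; simpl; intros Hdef.
  - assert (H := is_derive_minner n _ _ _ _ _ (fun k => jet_dir_spec a b k p v0 v1 Hp)
                   (fun k => jet_dir_spec c d k p v0 v1 Hp)).
    cbv beta in H. rewrite HL in H.
    rewrite minner_plus_l, minner_plus_r, !minner_scal_l, !minner_scal_r in H.
    exact_with_value H. unfold gram, jet_vec. ring.
  - assert (H := is_derive_minner_const_r n _ _ Z _ (fun k => jet_dir_spec a b k p v0 v1 Hp)).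
    rewrite minner_plus_l, !minner_scal_l in H.
    exact_with_value H. unfold zgram, jet_vec. ring.
  - apply Hw.
  - exact (is_derive_const _ _).
  - exact (is_derive_plus _ _ _ _ _ (IHe1 (proj1 Hdef)) (IHe2 (proj2 Hdef))).
  - assert (H := is_derive_mult _ _ _ _ _ (IHe1 (proj1 Hdef)) (IHe2 (proj2 Hdef)) Rmult_comm).
    cbv beta in H. rewrite HL in H. exact H.
  - destruct Hdef as [Hdef Hnz].
    assert (Hnz' : jval (fst p + 0 * v0, snd p + 0 * v1) e <> 0) by (rewrite HL; exact Hnz).
    assert (H := is_derive_inv _ _ _ (IHe Hdef) Hnz'). cbv beta in H. rewrite HL in H.
    exact_with_value H. unfold jval. field. exact Hnz.
  - exact (is_derive_opp _ _ _ (IHe Hdef)).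
Qed.

Lemma jeval_dir_locally_constant (e : jexpr) (c : R) (p : pt) (v0 v1 : R) (dw : nat -> R) :
  U p -> (forall i, is_dir_derive (fun q => wcoord q i) p v0 v1 (dw i)) -> jdefined p e ->
  (forall q, U q -> jval q e = c) -> jeval_dir (gram p) (zgram p) (wcoord p) v0 v1 dw e = 0.
Proof.
  intros Hp Hw Hdef Hc.
  apply (is_dir_derive_unique (fun q => jval q e) p v0 v1);
    [exact (jval_dir_spec e p v0 v1 dw Hp Hw Hdef) |].
  apply (is_dir_derive_local U (fun _ => c)); [exact HU | exact Hp | | apply is_dir_derive_const].
  intros q Hq. symmetry. auto.
Qed.

Lemma symmetrize_gram (q : pt) (a b c d : nat) : symmetrize (gram q) a b c d = gram q a b c d.
Proof. unfold symmetrize. destruct (Nat.leb _ _); [reflexivity | apply minner_sym]. Qed.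

Lemma jval_symmetrize (q : pt) (e : jexpr) :
  jeval (symmetrize (gram q)) (zgram q) (wcoord q) e = jval q e.
Proof. apply jeval_ext, symmetrize_gram. Qed.

Lemma jeval_dir_symmetrize (q : pt) (v0 v1 : R) (dw : nat -> R) (e : jexpr) :
  jeval_dir (symmetrize (gram q)) (zgram q) (wcoord q) v0 v1 dw e
  = jeval_dir (gram q) (zgram q) (wcoord q) v0 v1 dw e.
Proof. apply jeval_dir_ext, symmetrize_gram. Qed.

Lemma g_jval (i j : nat) (q : pt) : g n X i j q = jval q (metricE i j).
Proof. destruct i, j; reflexivity. Qed.

Lemma pd_g (k i j : nat) (q : pt) : U q -> pd k (g n X i j) q = jval q (jderiv k (metricE i j)).
Proof.
  intros Hq. rewrite (functional_extensionality _ _ (fun r => g_jval i j r)).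
  apply pd_jval; simpl; auto.
Qed.

Lemma Chr_jval (k i j : nat) (q : pt) : U q -> Chr n X k i j q = jval q (ChrE k i j).
Proof. intros Hq. unfold Chr. rewrite !pd_g by exact Hq. destruct k; reflexivity. Qed.

Lemma pd_Chr (m k i j : nat) (p : pt) : U p -> jval p detE <> 0 ->
  pd m (Chr n X k i j) p = jval p (jderiv m (ChrE k i j)).
Proof.
  intros Hp Hd. rewrite (pd_local U (Chr n X k i j) (fun q => jval q (ChrE k i j)) m p HU Hp)
    by (intros; apply Chr_jval; assumption).
  apply pd_jval; [exact Hp | destruct k, i, j; simpl; tauto | destruct k, i, j; simpl; tauto].
Qed.

Lemma GaussK_jval (p : pt) : U p -> jval p detE <> 0 -> GaussK n X p = jval p GaussKE.
Proof.
  intros Hp Hd. unfold GaussK, Rup. rewrite !pd_Chr, !Chr_jval by assumption. reflexivity.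
Qed.

Lemma tancoef_jval (k : nat) (q : pt) : tancoef n X k Z q = jval q (ztanE k).
Proof.
  unfold tancoef. rewrite (minner_sym n Z (vpd 0 X q)), (minner_sym n Z (vpd 1 X q)).
  destruct k; reflexivity.
Qed.

Lemma minner_tvec (a b c d : R) (q : pt) :
  minner n (tvec X a b q) (tvec X c d q) =
  a * c * g n X 0 0 q + a * d * g n X 0 1 q + b * c * g n X 1 0 q + b * d * g n X 1 1 q.
Proof.
  unfold tvec, vadd, vscale, g.
  rewrite minner_plus_l, !minner_plus_r, !minner_scal_l, !minner_scal_r. ring.
Qed.

Lemma ZTnorm_jval (q : pt) : minner n (tanproj n X Z q) (tanproj n X Z q) = jval q ZTnormE.
Proof. unfold tanproj. rewrite minner_tvec, !tancoef_jval, !g_jval. reflexivity. Qed.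

Lemma Wnorm_jval (q : pt) :
  minner n (tvec X (w0 q) (w1 q) q) (tvec X (w0 q) (w1 q) q) = jval q WnormE.
Proof. rewrite minner_tvec, !g_jval. reflexivity. Qed.

Lemma ZTW_jval (q : pt) : minner n (tanproj n X Z q) (tvec X (w0 q) (w1 q) q) = jval q ZTWE.
Proof. unfold tanproj. rewrite minner_tvec, !tancoef_jval, !g_jval. reflexivity. Qed.

Lemma timelike_det_neq0 (q : pt) : timelike_at n X q -> jval q detE <> 0.
Proof.
  intros [a [b [c [d [H1 [H2 H3]]]]]].
  rewrite !minner_tvec in *.
  change (jval q detE) with (detg n X q). unfold detg.
  assert (Hs : g n X 1 0 q = g n X 0 1 q) by (unfold g; apply minner_sym).
  rewrite Hs in *.
  set (g00 := g n X 0 0 q) in *. set (g01 := g n X 0 1 q) in *. set (g11 := g n X 1 1 q) in *.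
  intro H0.
  assert (E : (a*a*g00 + a*b*g01 + b*a*g01 + b*b*g11) * (c*c*g00 + c*d*g01 + d*c*g01 + d*d*g11)
     - (a*c*g00 + a*d*g01 + b*c*g01 + b*d*g11) * (a*c*g00 + a*d*g01 + b*c*g01 + b*d*g11)
     = (a*d - b*c) * (a*d - b*c) * (g00 * g11 - g01 * g01)) by ring.
  rewrite H1, H2, H3, H0 in E. lra.
Qed.

Lemma lightlike_ztan_neq0 (q : pt) : lightlike n (tanproj n X Z q) ->
  jval q (ztanE 0) <> 0 \/ jval q (ztanE 1) <> 0.
Proof.
  intros [[i [_ Hne]] _]. rewrite <- !tancoef_jval.
  destruct (classic (tancoef n X 0 Z q = 0)) as [H0 | H0]; [| left; exact H0].
  destruct (classic (tancoef n X 1 Z q = 0)) as [H1 | H1]; [| right; exact H1].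
  exfalso. apply Hne. unfold tanproj, tvec, vadd, vscale. rewrite H0, H1. ring.
Qed.

Lemma vpd_jet_vec (i : nat) (q : pt) : vpd i X q = jet_vec (idx_u i) (idx_v i) q.
Proof. destruct i; reflexivity. Qed.

Lemma tancoef_jet_jval (a b k : nat) (q : pt) :
  tancoef n X k (jet_vec a b q) q = jval q (jet_tanE a b k).
Proof. destruct k; reflexivity. Qed.

Lemma normproj_dot_jval (a b : nat) (q : pt) :
  minner n (normproj n X (jet_vec a b q) q) (normproj n X Z q) = jval q (jet_perp_dotE a b).
Proof.
  unfold normproj, vsub, tanproj, tvec, vadd, vscale.
  rewrite minner_minus_l, !minner_minus_r, !minner_plus_l, !minner_plus_r,
    !minner_scal_l, !minner_scal_r, !tancoef_jval, !tancoef_jet_jval, !vpd_jet_vec.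
  unfold jval; simpl. unfold gram, zgram. ring.
Qed.


Lemma II_jet (i j : nat) (q : pt) : U q ->
  II n X i j q = normproj n X (jet_vec (idx_u i + idx_u j) (idx_v i + idx_v j) q) q.
Proof.
  intros Hq. unfold II. f_equal. extensionality k.
  destruct i, j; try reflexivity. exact (pd_v_jet 1 0 k q Hq).
Qed.

Definition II_WW_Zperp (q : pt) : R :=
  minner n (IIv n X (w0 q) (w1 q) (w0 q) (w1 q) q) (normproj n X Z q).

Lemma II_WW_Zperp_jval (q : pt) : U q -> jval q detE <> 0 -> II_WW_Zperp q = jval q aE.
Proof.
  intros Hq Hd. unfold II_WW_Zperp, IIv.
  rewrite !minner_plus_l, !minner_scal_l, !II_jet, !normproj_dot_jval by exact Hq.
  transitivity (jval q (second_jetsE jet_perp_dotE)); [reflexivity |].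
  rewrite <- !jval_symmetrize. apply aE_perp_proj. rewrite jval_symmetrize. exact Hd.
Qed.

End Surface.

(** * Surfaces with a canonical null direction *)

Section NullFrameSurface.
Variables (n : nat) (U : pt -> Prop) (X : pt -> vec) (Z : vec) (w0 w1 : pt -> R).
Hypothesis HU : open2 U.
Hypothesis HX : forall k, smooth_on U (fun p => X p k).
Hypothesis Htimelike : forall p, U p -> timelike_at n X p.
Hypothesis HZT : forall p, U p -> lightlike n (tanproj n X Z p).
Hypothesis HW : forall p, U p -> lightlike n (tvec X (w0 p) (w1 p) p).
Hypothesis HZTW : forall p, U p -> minner n (tanproj n X Z p) (tvec X (w0 p) (w1 p) p) = -1.

Local Notation val := (jval n X Z w0 w1).
Local Notation gram := (gram n X).
Local Notation zgram := (zgram n X Z).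

Lemma null_frame_at (q : pt) : U q -> null_frame (gram q) (zgram q) (wcoord w0 w1 q).
Proof.
  intros Hq. unfold null_frame. rewrite !jval_symmetrize.
  repeat split.
  - exact (timelike_det_neq0 n X Z w0 w1 q (Htimelike q Hq)).
  - rewrite <- ZTnorm_jval. exact (proj2 (HZT q Hq)).
  - rewrite <- Wnorm_jval. exact (proj2 (HW q Hq)).
  - rewrite <- ZTW_jval. exact (HZTW q Hq).
  - exact (lightlike_ztan_neq0 n X Z w0 w1 q (HZT q Hq)).
Qed.

Lemma det_jval_neq0 (q : pt) : U q -> val q detE <> 0.
Proof. intros Hq. rewrite <- jval_symmetrize. exact (proj1 (null_frame_at q Hq)). Qed.

Lemma W_jval (q : pt) : U q ->
  val q zdot_normE <> 0 /\ w0 q = val q (WsolE 0) /\ w1 q = val q (WsolE 1).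
Proof.
  intros Hq. rewrite <- !jval_symmetrize. exact (null_partner_eq _ _ _ (null_frame_at q Hq)).
Qed.

Ltac solve_jdefined :=
  cbn [jdefined aE second_jetsE wwE jet_dot_ZperpE ztanE ginvE zdotE metricE
       WnormE ZWE metric_formE WsolE zdot_normE JSub];
  repeat split;
  match goal with
  | |- jval _ _ _ _ _ _ ?e <> 0 =>
      match goal with H : jval _ _ _ _ _ _ e <> 0 |- _ => exact H end
  end.

(* [WsolE i] is W-free, so evaluating it with W replaced by 0 gives the same
   values while making the evaluation map visibly independent of W. *)
Lemma WsolE_dir_derive (p : pt) (v0 v1 : R) (i : nat) : U p ->
  let zero := fun _ : pt => 0 in
  is_dir_derive (fun q => jval n X Z zero zero q (WsolE i)) p v0 v1
    (jeval_dir (gram p) (zgram p) (wcoord zero zero p) v0 v1 (fun _ => 0) (WsolE i)).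
Proof.
  intros Hp zero. assert (Hd := det_jval_neq0 p Hp). destruct (W_jval p Hp) as [Hnorm _].
  apply (jval_dir_spec n U X Z zero zero HU HX); [exact Hp | |].
  - intros [|j]; exact (is_dir_derive_const 0 p v0 v1).
  - destruct i; solve_jdefined.
Qed.

Lemma W_dir_derive (p : pt) (v0 v1 : R) : U p ->
  exists dw, forall i, is_dir_derive (fun q => wcoord w0 w1 q i) p v0 v1 (dw i).
Proof.
  intros Hp. set (zero := fun _ : pt => 0).
  set (dW := fun i =>
    jeval_dir (gram p) (zgram p) (wcoord zero zero p) v0 v1 (fun _ => 0) (WsolE i)).
  exists (fun i => match i with O => dW 0%nat | S _ => dW 1%nat end).
  intros [|i].
  - apply (is_dir_derive_local U (fun q => jval n X Z zero zero q (WsolE 0)) _ p v0 v1 _ HU Hp).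
    + intros q Hq. symmetry. exact (proj1 (proj2 (W_jval q Hq))).
    + exact (WsolE_dir_derive p v0 v1 0 Hp).
  - apply (is_dir_derive_local U (fun q => jval n X Z zero zero q (WsolE 1)) _ p v0 v1 _ HU Hp).
    + intros q Hq. symmetry. exact (proj2 (proj2 (W_jval q Hq))).
    + exact (WsolE_dir_derive p v0 v1 1 Hp).
Qed.

Lemma Wnorm_jval_zero (q : pt) : U q -> val q WnormE = 0.
Proof. intros Hq. rewrite <- Wnorm_jval. exact (proj2 (HW q Hq)). Qed.

Lemma ZW_jval (q : pt) : U q -> val q ZWE = -1.
Proof.
  intros Hq. destruct (null_frame_at q Hq) as [Hd [_ [_ [HZTW' _]]]].
  rewrite <- jval_symmetrize, <- ZTWE_eq by exact Hd. exact HZTW'.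
Qed.

Lemma ZTnorm_det_jval_zero (q : pt) : U q -> val q ZTnorm_detE = 0.
Proof.
  intros Hq. destruct (null_frame_at q Hq) as [Hd [HC _]].
  rewrite <- jval_symmetrize, ZTnorm_detE_eq, HC by exact Hd. ring.
Qed.

Lemma pd_ZTnorm_det_zero (k : nat) (q : pt) : U q -> val q (jderiv k ZTnorm_detE) = 0.
Proof.
  intros Hq. rewrite <- (pd_jval n U X Z w0 w1 HU HX ZTnorm_detE q k Hq) by (simpl; tauto).
  rewrite (pd_local U _ (fun _ => 0) k q HU Hq ZTnorm_det_jval_zero). apply pd_const.
Qed.

Lemma pd2_ZTnorm_det_zero (l m : nat) (q : pt) : U q ->
  val q (jderiv l (jderiv m ZTnorm_detE)) = 0.
Proof.
  intros Hq.
  rewrite <- (pd_jval n U X Z w0 w1 HU HX (jderiv m ZTnorm_detE) q l Hq)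
    by (destruct m; simpl; tauto).
  rewrite (pd_local U _ (fun _ => 0) l q HU Hq (fun r Hr => pd_ZTnorm_det_zero m r Hr)).
  apply pd_const.
Qed.

Lemma dir_derive_II_WW_Zperp (p : pt) : U p ->
  is_dir_derive (II_WW_Zperp n X Z w0 w1) p (tancoef n X 0 Z p) (tancoef n X 1 Z p) (GaussK n X p).
Proof.
  intros Hp. assert (Hd := det_jval_neq0 p Hp).
  rewrite !(tancoef_jval n X Z w0 w1), (GaussK_jval n U X Z w0 w1 HU HX p Hp Hd).
  set (v0 := val p (ztanE 0)). set (v1 := val p (ztanE 1)).
  destruct (W_dir_derive p v0 v1 Hp) as [dw Hdw].
  set (der := jeval_dir (gram p) (zgram p) (wcoord w0 w1 p) v0 v1 dw).
  assert (HdW : der WnormE = 0).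
  { apply (jeval_dir_locally_constant n U X Z w0 w1 HU HX _ 0 p v0 v1 dw Hp Hdw);
      [solve_jdefined | exact Wnorm_jval_zero]. }
  assert (HdZW : der ZWE = 0).
  { apply (jeval_dir_locally_constant n U X Z w0 w1 HU HX _ (-1) p v0 v1 dw Hp Hdw);
      [solve_jdefined | exact ZW_jval]. }
  assert (Ha : is_dir_derive (II_WW_Zperp n X Z w0 w1) p v0 v1 (der aE)).
  { apply (is_dir_derive_local U (fun q => val q aE)); [exact HU | exact Hp | |].
    - intros q Hq. symmetry. exact (II_WW_Zperp_jval n U X Z w0 w1 HU HX q Hq (det_jval_neq0 q Hq)).
    - apply (jval_dir_spec n U X Z w0 w1 HU HX aE p v0 v1 dw Hp Hdw). solve_jdefined. }
  destruct (constraint_terms_vanish (gram p) (zgram p) (wcoord w0 w1 p) ZTnorm_detE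
              (fun k => pd_ZTnorm_det_zero k p Hp) (fun l m => pd2_ZTnorm_det_zero l m p Hp))
    as [Hhess [Hdd Hdir]].
  assert (Hdefect := gauss_curvature_defect (gram p) (zgram p) (wcoord w0 w1 p) dw
                       (null_frame_at p Hp)).
  rewrite !jval_symmetrize, !jeval_dir_symmetrize in Hdefect.
  fold v0 v1 der in Hdefect.
  change (jeval (gram p) (zgram p) (wcoord w0 w1 p)) with (val p) in Hhess, Hdd, Hdir.
  rewrite Hhess, Hdd, Hdir, HdW, HdZW in Hdefect.
  replace (val p GaussKE) with (der aE) by (unfold Rdiv in Hdefect; lra).
  exact Ha.
Qed.

End NullFrameSurface.

Theorem mainTheorem5 (n : nat) (U : pt -> Prop) (X : pt -> vec) (Z : vec)
  (w0 w1 : pt -> R) :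
  open2 U ->
  (forall k, smooth_on U (fun p => X p k)) ->
  (forall p, U p -> immersion_at n X p) ->
  (forall p, U p -> timelike_at n X p) ->
  minner n Z Z = 1 ->
  (forall p, U p -> lightlike n (tanproj n X Z p)) ->
  (forall p, U p -> lightlike n (tvec X (w0 p) (w1 p) p)) ->
  (forall p, U p -> minner n (tanproj n X Z p) (tvec X (w0 p) (w1 p) p) = -1) ->
  let a := fun q : pt =>
    minner n (IIv n X (w0 q) (w1 q) (w0 q) (w1 q) q) (normproj n X Z q) in
  forall p, U p ->
    derivable_pt_lim
      (fun s => a (fst p + s * tancoef n X 0 Z p, snd p + s * tancoef n X 1 Z p))
      0 (GaussK n X p).
Proof.
  intros HU HX _ Htimelike _ HZT HW HZTW a p Hp.
  apply is_derive_Reals.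
  exact (dir_derive_II_WW_Zperp n U X Z w0 w1 HU HX Htimelike HZT HW HZTW p Hp).
Qed.
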